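(* Let $N\ge 2$ and let $K=\{x\in\mathbb{R}^N : x_i^2+x_{i+1}^2\le 1\ \text{for all } 1\le i\le N-1\}$. For every subset $I\subset\{2,\dots,N-2\}$ containing no two consecutive integers, let $$K_I=\{x\in K : x_i^2+x_{i+1}^2=1 \text{ for } i\in\{1,\dots,N-1\}\setminus I,\ \ x_i^2+x_{i+1}^2<1\text{ for } i\in I\}.$$ Then the set of extreme points of $K$ is $\bigcup_I K_I$, the union running over all subsets $I\subset\{2,\dots,N-2\}$ with no two consecutive elements. *)

From HB Require Import structures.
From mathcomp Require Import all_boot all_order all_algebra.
From mathcomp Require Import reals.
Set Implicit Arguments. Unset Strict Implicit. Unset Printing Implicit Defensive.
Import Order.TTheory GRing.Theory Num.Theory.
Local Open Scope ring_scope.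

(* 0-based coordinate access: coord x i = x_(i+1) in the paper's 1-based
   indexing when i < N, and 0 (irrelevant) otherwise. *)
Definition coord (R : realType) (N : nat) (x : 'rV[R]_N) (i : nat) : R :=
  if insub i is Some j then x ord0 j else 0.

Definition q (R : realType) (N : nat) (x : 'rV[R]_N) (i : nat) : R :=
  coord x i ^+ 2 + coord x i.+1 ^+ 2.

Definition inK (R : realType) (N : nat) (x : 'rV[R]_N) : Prop :=
  forall i : nat, (i.+1 < N)%N -> q x i <= 1.

Definition extreme_point (R : realType) (N : nat) (S : 'rV[R]_N -> Prop)
  (x : 'rV[R]_N) : Prop :=
  S x /\ forall (y z : 'rV[R]_N) (t : R), S y -> S z -> 0 < t -> t < 1 ->
    x = t *: y + (1 - t) *: z -> y = z.

(* Admissible index sets, 0-based: the paper's I ⊂ {2,...,N-2} (1-based pair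
   indices) becomes I ⊂ {1,...,N-3}, with no two consecutive elements. *)
Definition admissible (N : nat) (I : nat -> bool) : Prop :=
  (forall i, I i -> (1 <= i)%N /\ (i.+3 <= N)%N) /\
  (forall i, I i -> ~~ I i.+1).

Definition inKI (R : realType) (N : nat) (I : nat -> bool) (x : 'rV[R]_N) : Prop :=
  inK x /\
  forall i : nat, (i.+1 < N)%N ->
    (I i -> q x i < 1) /\ (~~ I i -> q x i = 1).

From Pilot Require Import Defs.
From HB Require Import structures.
From mathcomp Require Import all_boot all_order all_algebra.
From mathcomp Require Import reals.
From mathcomp Require Import ring lra.
Import Order.TTheory GRing.Theory Num.Theory.
Local Open Scope ring_scope.

Set Implicit Arguments.
Unset Strict Implicit.

(* A point x of K is extreme iff every coordinate x_k belongs to a tight pair,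
   i.e. one of the pairs (x_(k-1), x_k), (x_k, x_(k+1)) lies on the unit circle.
   If so, strict convexity of the unit disk forces any two points of K whose
   proper convex combination is x to agree with each other on that pair.
   If not, both pairs through x_k have slack and x_k can be moved by a small
   +-d inside K.  Hence the slack pairs of an extreme point form an admissible
   set: the first and last pairs are the only ones through x_1 and x_N, and two
   consecutive slack pairs would free their common coordinate.  Conversely an
   admissible set of slack pairs leaves every coordinate in a tight pair. *)

Lemma disk_boundary_extreme (R : realFieldType) (t a b c d e f : R) :
  0 < t -> t < 1 ->
  c ^+ 2 + d ^+ 2 <= 1 -> e ^+ 2 + f ^+ 2 <= 1 ->
  a = t * c + (1 - t) * e -> b = t * d + (1 - t) * f -> a ^+ 2 + b ^+ 2 = 1 ->
  c = e /\ d = f.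
Proof.
move=> t0 t1 hcd hef -> -> hab.
have strict_convexity : t * (1 - t) * ((c - e) ^+ 2 + (d - f) ^+ 2) =
    t * (c ^+ 2 + d ^+ 2) + (1 - t) * (e ^+ 2 + f ^+ 2)
    - ((t * c + (1 - t) * e) ^+ 2 + (t * d + (1 - t) * f) ^+ 2).
  by ring.
have hdist : (c - e) ^+ 2 + (d - f) ^+ 2 <= 0.
  rewrite -(@pmulr_rle0 _ (t * (1 - t))) ?strict_convexity ?hab; nra.
have [hce hdf] : (c - e) ^+ 2 = 0 /\ (d - f) ^+ 2 = 0.
  by have := sqr_ge0 (c - e); have := sqr_ge0 (d - f); lra.
by split; apply/eqP; rewrite -subr_eq0 -sqrf_eq0 ?hce ?hdf.
Qed.

Lemma shift_in_disk (R : realFieldType) (a b s d : R) :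
  a ^+ 2 + b ^+ 2 + s <= 1 -> 0 < s -> s <= 1 -> 3 * `|d| <= s ->
  (a + d) ^+ 2 + b ^+ 2 <= 1.
Proof.
move=> h s0 s1; rewrite -ler_pdivlMl // ler_norml => /andP[hdl hdr].
have hb := sqr_ge0 b.
have [ha1 ha2] : a <= 1 /\ -1 <= a by split; nra.
have hd2 : d ^+ 2 <= s / 9 by nra.
have had : 2 * a * d <= 2 * s / 3 by nra.
nra.
Qed.

Section Coordinates.

Variables (R : realType) (N : nat).
Implicit Types (x y : 'rV[R]_N) (i : nat).

Lemma coord_ord x (k : 'I_N) : Defs.coord x k = x ord0 k.
Proof. by rewrite /Defs.coord valK. Qed.

Lemma coord_oob x i : (N <= i)%N -> Defs.coord x i = 0.
Proof. by move=> hi; rewrite /Defs.coord insubF // ltnNge hi. Qed.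

Lemma coordD x y i : Defs.coord (x + y) i = Defs.coord x i + Defs.coord y i.
Proof.
have [hi|hi] := ltnP i N; last by rewrite !coord_oob ?addr0.
by rewrite -[i]/(nat_of_ord (Ordinal hi)) !coord_ord mxE.
Qed.

Lemma coordZ (a : R) x i : Defs.coord (a *: x) i = a * Defs.coord x i.
Proof.
have [hi|hi] := ltnP i N; last by rewrite !coord_oob ?mulr0.
by rewrite -[i]/(nat_of_ord (Ordinal hi)) !coord_ord mxE.
Qed.

Lemma coord_delta j (hj : (j < N)%N) i :
  Defs.coord (delta_mx 0 (Ordinal hj)) i = ((i == j)%:R : R).
Proof.
have [hi|hi] := ltnP i N; last first.
  by rewrite coord_oob // gtn_eqF // (leq_trans hj).
by rewrite -[i]/(nat_of_ord (Ordinal hi)) coord_ord mxE.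
Qed.

Lemma q_ge0 x i : 0 <= q x i.
Proof. by rewrite addr_ge0 ?sqr_ge0. Qed.

End Coordinates.

Section ExtremePoints.

Variables (R : realType) (N : nat).
Implicit Types (x : 'rV[R]_N) (i j k : nat).

Lemma extreme_point_sym (S : 'rV[R]_N -> Prop) x v :
  extreme_point S x -> S (x + v) -> S (x - v) -> v = 0.
Proof.
move=> [_ ext] hp hm.
have half_gt0 : (0 : R) < 2^-1 by rewrite invr_gt0.
have half_lt1 : (2^-1 : R) < 1 by rewrite invf_lt1 //; lra.
have mid : x = 2^-1 *: (x + v) + (1 - 2^-1) *: (x - v).
  by apply/matrixP => i j; rewrite !mxE; field.
have /matrixP eq_pm := ext _ _ _ hp hm half_gt0 half_lt1 mid.
apply/matrixP => i j; have := eq_pm i j; rewrite !mxE; lra.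
Qed.

Lemma extreme_of_tight_cover x : inK x ->
    (forall k, (k < N)%N ->
       exists2 i, (i.+1 < N)%N /\ (k = i \/ k = i.+1) & q x i = 1) ->
  extreme_point (@inK R N) x.
Proof.
move=> hx tight; split=> // y z t hy hz t0 t1 hxyz.
apply/matrixP => a k; rewrite (ord1 a).
have [i [hi hik] hq] := tight k (ltn_ord k).
have coord_comb l : Defs.coord x l = t * Defs.coord y l + (1 - t) * Defs.coord z l.
  by rewrite hxyz coordD !coordZ.
have [eqi eqSi] := disk_boundary_extreme t0 t1 (hy i hi) (hz i hi)
  (coord_comb i) (coord_comb i.+1) hq.
by rewrite -!coord_ord; case: hik => ->.
Qed.

Lemma slack_margin x j : (j < N)%N ->
    (forall i, (i.+1 < N)%N -> j = i \/ j = i.+1 -> q x i < 1) ->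
  exists2 s : R, 0 < s <= 1 &
    forall i, (i.+1 < N)%N -> j = i \/ j = i.+1 -> q x i + s <= 1.
Proof.
move=> hj slack.
pose sl : R := if (0 < j)%N then 1 - q x j.-1 else 1.
pose sr : R := if (j.+1 < N)%N then 1 - q x j else 1.
have sl_pos : 0 < sl.
  rewrite /sl; case: ifP => // j_gt0; rewrite subr_gt0.
  by apply: slack; rewrite prednK //; right.
have sr_pos : 0 < sr.
  by rewrite /sr; case: ifP => // hj1; rewrite subr_gt0; apply: slack => //; left.
have sl_le1 : sl <= 1 by rewrite /sl; case: ifP => _; rewrite ?gerBl ?q_ge0.
have sr_le1 : sr <= 1 by rewrite /sr; case: ifP => _; rewrite ?gerBl ?q_ge0.
exists (Num.min sl sr); first by rewrite lt_min sl_pos sr_pos ge_min sl_le1.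
move=> i hi [eji|eji]; rewrite -lerBrDl ge_min /sl /sr eji.
- by rewrite hi lexx orbT.
- by rewrite /= lexx.
Qed.

Lemma inK_shift x j (hj : (j < N)%N) (s d : R) : inK x -> 0 < s <= 1 ->
    (forall i, (i.+1 < N)%N -> j = i \/ j = i.+1 -> q x i + s <= 1) ->
    3 * `|d| <= s ->
  inK (x + d *: delta_mx 0 (Ordinal hj)).
Proof.
move=> hx /andP[s_gt0 s_le1] margin hd i hi.
rewrite /q !coordD !coordZ !coord_delta.
have [eqij|_] := eqVneq i j.
  rewrite -eqij gtn_eqF // mulr1n mulr0n mulr1 mulr0 addr0.
  by apply: (shift_in_disk _ s_gt0) => //; apply: margin => //; left.
rewrite mulr0n mulr0 addr0.
have [eqSij|_] := eqVneq i.+1 j; last by rewrite mulr0n mulr0 addr0 hx.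
rewrite mulr1n mulr1 addrC; apply: (shift_in_disk _ s_gt0) => //.
by rewrite [_ ^+ 2 + _]addrC; apply: margin => //; right.
Qed.

Lemma free_coord_not_extreme x j : inK x -> (j < N)%N ->
    (forall i, (i.+1 < N)%N -> j = i \/ j = i.+1 -> q x i < 1) ->
  ~ extreme_point (@inK R N) x.
Proof.
move=> hx hj slack ext.
have [s s_range margin] := slack_margin hj slack.
have s_gt0 : 0 < s by case/andP: s_range.
pose e : 'rV[R]_N := delta_mx 0 (Ordinal hj).
have hd : 3 * `|s / 3| <= s by rewrite ger0_norm; lra.
have shift_up : inK (x + (s / 3) *: e) := inK_shift hj hx s_range margin hd.
have shift_down : inK (x + (- (s / 3)) *: e).
  by apply: (inK_shift hj hx s_range margin); rewrite normrN.
rewrite scaleNr in shift_down.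
move/matrixP/(_ 0 (Ordinal hj)): (extreme_point_sym ext shift_up shift_down).
by rewrite !mxE !eqxx mulr1; lra.
Qed.

Definition slack_pairs x : nat -> bool := fun i => (i.+1 < N)%N && (q x i < 1).

Lemma inKI_slack_pairs x : inK x -> inKI (slack_pairs x) x.
Proof.
move=> hx; split=> // i hi; rewrite /slack_pairs hi; split=> //=.
by rewrite -leNgt => hq; apply/eqP; rewrite eq_le hx.
Qed.

Lemma admissible_slack_pairs x :
  extreme_point (@inK R N) x -> admissible N (slack_pairs x).
Proof.
move=> ext; have hx := ext.1; split=> i /andP[hi hq].
- split.
    case: i hi hq => // hi hq; exfalso.
    by apply: (free_coord_not_extreme hx (ltnW hi) _ ext) => -[|i] _ [].
  rewrite leqNgt; apply/negP => hlast.
  apply: (free_coord_not_extreme hx hi _ ext) => i' hi' [eqi' | [<-]] //.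
  by move: hi' hlast; rewrite -eqi' ltnNge => /negP.
- apply/negP => /andP[hi2 hq2].
  by apply: (free_coord_not_extreme hx hi _ ext) => i' _ [<- | [<-]].
Qed.

Lemma extreme_of_inKI I x : (2 <= N)%N -> admissible N I -> inKI I x ->
  extreme_point (@inK R N) x.
Proof.
move=> hN [I_inner I_sparse] [hx hI]; apply: extreme_of_tight_cover => // -[|k] hk.
  exists 0%N; first by split; [|left].
  by apply: (hI 0%N hN).2; apply/negP => /I_inner[].
case Ik: (I k).
  have [_ hk2] := I_inner k Ik.
  exists k.+1; first by split; [|left].
  by apply: (hI k.+1 hk2).2; apply: I_sparse.
exists k; first by split; [|right].
by apply: (hI k hk).2; rewrite Ik.
Qed.

End ExtremePoints.

Unset Implicit Arguments.

Theorem mainTheorem6 (R : realType) (N : nat) (hN : (2 <= N)%N) (x : 'rV[R]_N) :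
  extreme_point (@inK R N) x <-> exists I : nat -> bool, admissible N I /\ inKI I x.
Proof.
split=> [ext | [I [adm hI]]].
- exists (slack_pairs x); split; first exact: admissible_slack_pairs.
  exact: inKI_slack_pairs ext.1.
- exact: extreme_of_inKI hN adm hI.
Qed.
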